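(* In the exploration process and with the random variables $M(t,i)$ described in the context, the sequence of random variables $$M(0,n-a),\,M(1,1),\dots,M(1,n-a),\,M(2,1),\dots,M(n,n-a)$$ (indexed in lexicographic order of $(t,i)$) forms a martingale with respect to the filtration it generates.
   Context: Let $r\ge2$, $0<p<1$, and consider the random graph $G(n,p)$ on $[n]$ (each edge independently present with probability $p$). Let the initially infected set be $\mathcal{A}(0)=\{1,\dots,a\}$. Exploration process: set $\mathcal{Z}(0)=\emptyset$. For each step $t=1,\dots,n$: if $\mathcal{A}(t-1)\setminus\mathcal{Z}(t-1)\neq\emptyset$, pick a vertex $u_t$ in it by an arbitrary rule and set $\mathcal{Z}(t)=\mathcal{Z}(t-1)\cup\{u_t\}$; otherwise $\mathcal{Z}(t)=\mathcal{Z}(t-1)$. For $t\ge0$ and $i\in[n-a]$ let $X(t,i)$ be the indicator that vertex $a+i$ has at least $r$ neighbours in $\mathcal{Z}(t)$, and set $\mathcal{A}(t)=\mathcal{A}(0)\cup\{a+i: X(t,i)=1,\ i\in[n-a]\}$. Let $T$ be the smallest $t$ with $\mathcal{A}(t)=\mathcal{Z}(t)$ (equivalently $|\mathcal{A}(t)|=t$); $\mathcal{A}(T)$ is the final infected set of bootstrap percolation with threshold $r$. Let $\hat\pi(t)=\mathbb{P}[\mathrm{Bin}(t,p)\ge r]$ and define the random quantity $\pi(t)=\hat\pi(t)$ for $t\le T$ and $\pi(t)=\hat\pi(T)$ for $t>T$. Each step $t\ge1$ is divided into rounds $(t,1),\dots,(t,n-a)$, ordered lexicographically, preceded by $(0,n-a)$.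 For $(t,i)\ge(0,n-a)$ define $$M(t,i):=\sum_{j=1}^{i}\frac{X(t,j)-\pi(t)}{1-\pi(t)}+\sum_{j=i+1}^{n-a}\frac{X(t-1,j)-\pi(t-1)}{1-\pi(t-1)}.$$ *)

From mathcomp Require Import all_boot all_order all_algebra.
Set Implicit Arguments. Unset Strict Implicit. Unset Printing Implicit Defensive.
Import Order.TTheory GRing.Theory Num.Theory.
Local Open Scope ring_scope.

(* finite space, sigma(Y 0,...,Y k) is generated by the level sets of  *)
(* the vector (Y 0,...,Y k), so  E[Y (k+1) | Y 0..Y k] = Y k  a.s.     *)
(* means exactly: the P-weighted sum of  Y (k+1) - Y k  over every     *)
(* such level set (atom) vanishes.  Integrability is automatic.        *)
Definition natural_martingale (R : numDomainType) (Omega : finType)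
  (P : Omega -> R) (N : nat) (Y : nat -> Omega -> R) : Prop :=
  forall k : nat, (k < N)%N -> forall w0 : Omega,
    \sum_(w | [forall j : 'I_k.+1, Y j w == Y j w0]) P w * (Y k.+1 w - Y k w) = 0.

Section Bootstrap.
Variables (R : realFieldType) (n a r : nat) (p : R).

(* Vertices [1..n] are represented by 'I_n (vertex v+1 <-> index v). *)
Definition edge_slot := {x : 'I_n * 'I_n | (x.1 < x.2)%N}.

Definition graph := {set edge_slot}.

Definition Gnp (G : graph) : R :=
  \prod_(e : edge_slot) (if e \in G then p else 1 - p).

Definition adj (G : graph) (u v : 'I_n) : bool :=
  [exists e in G, (val e == (u, v)) || (val e == (v, u))].

Definition nbr_count (G : graph) (Z : {set 'I_n}) (v : 'I_n) : nat :=
  #|[set u in Z | adj G u v]|.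

(* A(t) as a function of Z(t): the initially infected vertices 1..a
   (indices < a) together with the vertices a+i having >= r neighbours in Z. *)
Definition Aset (G : graph) (Z : {set 'I_n}) : {set 'I_n} :=
  [set v : 'I_n | (v < a)%N || ((a <= v)%N && (r <= nbr_count G Z v)%N)].

(* The selection rule: at step t, given Z(t-1) and A(t-1), it picks a vertex
   (required to lie in A(t-1) \ Z(t-1) whenever this set is nonempty). *)
Variable rule : nat -> {set 'I_n} -> {set 'I_n} -> 'I_n.

Fixpoint Zset (G : graph) (t : nat) : {set 'I_n} :=
  match t with
  | 0 => set0
  | t'.+1 =>
      let Z := Zset G t' in
      let A := Aset G Z in
      if A :\: Z != set0 then rule t Z A |: Z else Z
  end.

(* T = smallest t with A(t) = Z(t) (it always exists with T <= n). *)
Definition Tstop (G : graph) : nat :=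
  find (fun t => Aset G (Zset G t) == Zset G t) (iota 0 n.+1).

(* X(t, j+1): vertex a+j+1 (index a+j) has >= r neighbours in Z(t);
   here j ranges over 0 .. n-a-1 (0-based). *)
Definition Xind (G : graph) (t j : nat) : bool :=
  [exists u : 'I_n, (val u == a + j)%N && (r <= nbr_count G (Zset G t) u)%N].

(* hat pi(t) = P[Bin(t,p) >= r] *)
Definition pihat (t : nat) : R :=
  \sum_(r <= k < t.+1) 'C(t, k)%:R * p ^+ k * (1 - p) ^+ (t - k).

Definition piT (G : graph) (t : nat) : R := pihat (minn t (Tstop G)).

(* M(t,i) = sum_{j=1}^i (X(t,j)-pi(t))/(1-pi(t))
          + sum_{j=i+1}^{n-a} (X(t-1,j)-pi(t-1))/(1-pi(t-1)),
   with 0-based summation index j0 = j-1. *)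
Definition Mti (G : graph) (t i : nat) : R :=
  \sum_(0 <= j < i) (((Xind G t j)%:R - piT G t) / (1 - piT G t))
  + \sum_(i <= j < n - a) (((Xind G t.-1 j)%:R - piT G t.-1) / (1 - piT G t.-1)).

(* The sequence M(0,n-a), M(1,1), ..., M(1,n-a), M(2,1), ..., M(n,n-a):
   term k >= 1 is M(t,i) with t = (k-1) div (n-a) + 1, i = (k-1) mod (n-a) + 1;
   the last index is n*(n-a). *)
Definition Mseq (k : nat) (G : graph) : R :=
  if k is k'.+1 then Mti G (k' %/ (n - a)).+1 (k' %% (n - a)).+1
  else Mti G 0 (n - a).

End Bootstrap.

From Pilot Require Import Defs.
From mathcomp Require Import all_boot all_order all_algebra zify ring.
Import Order.TTheory GRing.Theory Num.Theory.
Local Open Scope ring_scope.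
Set Implicit Arguments. Unset Strict Implicit. Unset Printing Implicit Defensive.

(** The increment M(k+1) - M(k) compares the normalised indicators of a single vertex v at
    consecutive times t - 1 and t.  If v is already infected at time t - 1 both equal 1.
    Otherwise the exploration has not touched v before time t, so Z(0), ..., Z(t), the
    truncation of T at t and all of M(0), ..., M(k) are unchanged when the edges at v are
    deleted.  Conditionally on the graph H in which v is isolated, the edges at v are
    independent Bernoulli(p), so the numbers B1 <= B2 of neighbours of v in Z(t-1) and Z(t)
    are binomial with sizes |Z(s)| = min(s, T).  With x = pi(t-1) and y = pi(t) the
    conditional mean of the increment is
      E[1{B1 < r} ((1{B2 >= r} - y) / (1 - y) + x / (1 - x))]
        = (y - x) / (1 - y) - (1 - x) y / (1 - y) + x = 0,
    and summing over the graphs H inside an atom of M(0), ..., M(k) gives the martingale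
    property. *)

Section ProductBernoulli.
Variables (R : comPzRingType) (p : R) (T : finType).

(* The probability that a [p]-random subset of [T] meets [A] in [G :&: A]. *)
Definition bweight (A G : {set T}) : R :=
  \prod_(e in A) (if e \in G then p else 1 - p).

Lemma bweightI (A G : {set T}) : bweight A (G :&: A) = bweight A G.
Proof. by apply: eq_bigr => e eA; rewrite inE eA andbT. Qed.

Lemma bweightU (A B G : {set T}) : [disjoint A & B] ->
  bweight (A :|: B) G = bweight A G * bweight B G.
Proof.
move=> dAB; rewrite /bweight (eq_bigl [predU A & B]) ?bigU // => e.
by rewrite !inE.
Qed.

Lemma bweight_subset (A K : {set T}) : K \subset A ->
  bweight A K = p ^+ #|K| * (1 - p) ^+ (#|A| - #|K|).
Proof.
move=> sKA; rewrite /bweight (bigID (mem K)) /=.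
rewrite (eq_bigr (fun _ => p)) => [|e /andP[_ ->]] //.
rewrite [X in _ * X](eq_bigr (fun _ => 1 - p)) => [|e /andP[_ /negbTE ->]] //.
rewrite !prodr_const -(cardsID K A) (setIidPr sKA) addKn.
congr (_ ^+ _ * _ ^+ _); apply: eq_card => e /=; last by rewrite inE andbC.
by apply: andb_idl => /(subsetP sKA).
Qed.

Lemma binomial_sum1 (s : nat) :
  \sum_(k < s.+1) 'C(s, k)%:R * p ^+ k * (1 - p) ^+ (s - k) = 1.
Proof.
transitivity ((1 - p + p) ^+ s); last by rewrite subrK expr1n.
rewrite exprDn; apply: eq_bigr => k _.
by rewrite -mulrA mulr_natl (mulrC (p ^+ k)).
Qed.

Lemma sum_bweight_card (A : {set T}) (phi : nat -> R) :
  \sum_(K : {set T} | K \subset A) bweight A K * phi #|K| =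
  \sum_(k < #|A|.+1) 'C(#|A|, k)%:R * p ^+ k * (1 - p) ^+ (#|A| - k) * phi k.
Proof.
have cardK (K : {set T}) : K \subset A -> (#|K| < #|A|.+1)%N.
  by move=> sKA; rewrite ltnS subset_leq_card.
rewrite (partition_big (fun K : {set T} => (inord #|K| : 'I_#|A|.+1)) xpredT) //=.
apply: eq_bigr => k _.
rewrite (eq_bigr (fun _ => p ^+ k * (1 - p) ^+ (#|A| - k) * phi k)); last first.
  by move=> K /andP[sKA /eqP <-]; rewrite bweight_subset // inordK ?cardK.
rewrite sumr_const -cards_draws -!mulrA mulr_natl cardsE; congr (_ *+ _).
apply: eq_card => K; rewrite !unfold_in; apply: andb_id2l => sKA.
by rewrite -val_eqE /= inordK ?cardK.
Qed.

Lemma sum_bweight (A : {set T}) : \sum_(K : {set T} | K \subset A) bweight A K = 1.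
Proof.
transitivity (\sum_(K : {set T} | K \subset A) bweight A K * (fun=> 1) #|K|).
  by apply: eq_bigr => K _; rewrite mulr1.
rewrite (sum_bweight_card A (fun=> 1)) -[RHS](binomial_sum1 #|A|).
by apply: eq_bigr => k _; rewrite mulr1.
Qed.

Lemma sum_bweight_fiber (A B h : {set T}) (F : {set T} -> R) :
  [disjoint A & B] -> h \subset B ->
  \sum_(G : {set T} | (G \subset A :|: B) && (G :&: B == h)) bweight (A :|: B) G * F (G :&: A)
  = bweight B h * \sum_(K : {set T} | K \subset A) bweight A K * F K.
Proof.
move=> dAB shB.
have hA : h :&: A = set0 by rewrite setIC; apply/disjoint_setI0/(disjointWr shB).
have KB (K : {set T}) : K \subset A -> K :&: B = set0.
  by move=> sKA; apply/disjoint_setI0/(disjointWl sKA).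
rewrite (reindex_onto (fun K : {set T} => K :|: h) (fun G => G :&: A)) /=; last first.
  move=> G /andP[sGAB /eqP <-].
  by rewrite -setIUr (setIidPl sGAB).
rewrite mulr_sumr; apply: eq_big => [K|K /andP[_ /eqP KhA]].
  apply/idP/idP => [/andP[_ /eqP <-]|sKA]; first exact: subsetIr.
  rewrite !setIUl KB // hA (setIidPl sKA) (setIidPl shB) set0U setU0 !eqxx.
  by rewrite !andbT (setUSS sKA shB).
have sKA : K \subset A by rewrite -KhA subsetIr.
rewrite KhA bweightU // -bweightI KhA -[bweight B _]bweightI.
by rewrite setIUl KB // set0U (setIidPl shB) mulrCA mulrA.
Qed.

Lemma sum_bweight_marginal (D D' : {set T}) (F : {set T} -> R) : D' \subset D ->
  \sum_(K : {set T} | K \subset D) bweight D K * F (K :&: D') =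
  \sum_(K : {set T} | K \subset D') bweight D' K * F K.
Proof.
move=> sD'D; set B := D :\: D'.
have dD'B : [disjoint D' & B] by rewrite /B -setI_eq0 setDE setICA setICr setI0.
have DU : D' :|: B = D by rewrite /B setDE setUIr setUCr setIT (setUidPr sD'D).
rewrite (partition_big (fun K : {set T} => K :&: B) (fun h => h \subset B)) => [|K _]; last first.
  exact: subsetIr.
rewrite -DU (eq_bigr (fun h => bweight B h * \sum_(K : {set T} | K \subset D') bweight D' K * F K)).
  by rewrite -mulr_suml sum_bweight mul1r.
by move=> h; apply: sum_bweight_fiber.
Qed.

End ProductBernoulli.

Section BinomialThresholds.
Variables (R : realFieldType) (r : nat) (p : R) (T : finType).

Lemma sum_bweight_ge (A : {set T}) :
  \sum_(K : {set T} | K \subset A) bweight p A K * (r <= #|K|)%:R = pihat r p #|A|.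
Proof.
rewrite (sum_bweight_card p A (fun k => (r <= k)%:R)) /pihat big_geq_mkord big_mkcondr /=.
by apply: eq_bigr => k _; case: (r <= k)%N; rewrite ?mulr1 ?mulr0.
Qed.

(* The increment of (1{B >= r} - pi) / (1 - pi) on the event B1 < r, when the count B grows
   from B1 to B2 and the tail probability pi from x to y. *)
Definition threshold_increment (x y : R) (B1 B2 : nat) : R :=
  (B1 < r)%N%:R * (((r <= B2)%N%:R - y) / (1 - y) + x / (1 - x)).

Hypotheses (r_gt0 : (0 < r)%N) (p_ge0 : 0 <= p) (p_lt1 : p < 1).

Lemma pihat_lt1 (s : nat) : pihat r p s < 1.
Proof.
rewrite -subr_gt0 -{1}(binomial_sum1 p s) (bigID (fun k : 'I_s.+1 => r <= k)%N) /=.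
rewrite /pihat big_geq_mkord addrC addrK (bigD1 ord0) /=; last by rewrite -ltnNge.
rewrite bin0 mul1r expr0 mul1r subn0 ltr_pwDl ?exprn_gt0 ?subr_gt0 //.
apply: sumr_ge0 => k _.
by rewrite !mulr_ge0 ?exprn_ge0 ?subr_ge0 ?ler0n // ltW.
Qed.

Lemma sum_bweight_threshold_increment (D D1 D2 : {set T}) :
  D1 \subset D2 -> D2 \subset D ->
  \sum_(K : {set T} | K \subset D) bweight p D K *
    threshold_increment (pihat r p #|D1|) (pihat r p #|D2|) #|K :&: D1| #|K :&: D2| = 0.
Proof.
move=> sD12 sD2D; set x := pihat r p #|D1|; set y := pihat r p #|D2|.
have mean_ge (D' : {set T}) : D' \subset D ->
    \sum_(K : {set T} | K \subset D) bweight p D K * (r <= #|K :&: D'|)%N%:R = pihat r p #|D'|.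
  by move=> sD'D; rewrite (sum_bweight_marginal p (fun K => (r <= #|K|)%N%:R) sD'D) sum_bweight_ge.
have x_neq1 : 1 - x != 0 by rewrite subr_eq0 gt_eqF ?pihat_lt1.
have y_neq1 : 1 - y != 0 by rewrite subr_eq0 gt_eqF ?pihat_lt1.
set c := x / (1 - x) - y / (1 - y).
(* As #|K :&: D1| <= #|K :&: D2|, the summand is affine in the two threshold indicators. *)
transitivity (\sum_(K : {set T} | K \subset D)
   ((1 - y)^-1 * (bweight p D K * (r <= #|K :&: D2|)%N%:R)
    - ((1 - y)^-1 + c) * (bweight p D K * (r <= #|K :&: D1|)%N%:R) + c * bweight p D K)).
  apply: eq_bigr => K _.
  have le12 : (#|K :&: D1| <= #|K :&: D2|)%N by apply/subset_leq_card/setIS.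
  rewrite /threshold_increment /c; case: (leqP r #|K :&: D1|) => [ge1|_] /=.
    by rewrite (leq_trans ge1 le12) /=; ring.
  by ring.
rewrite big_split sumrB /= -!mulr_sumr !mean_ge ?(subset_trans sD12) // sum_bweight /c -/x -/y.
by field; rewrite x_neq1 y_neq1.
Qed.

End BinomialThresholds.

Lemma sum_Gnp_fiber (R : realFieldType) (p : R) (n : nat) (D h : {set edge_slot n})
    (F : {set edge_slot n} -> R) : h \subset ~: D ->
  \sum_(G : graph n | G :\: D == h) Gnp p G * F (G :&: D)
  = bweight p (~: D) h * \sum_(K : {set edge_slot n} | K \subset D) bweight p D K * F K.
Proof.
move=> shD; have dD : [disjoint D & ~: D] by rewrite -setI_eq0 setICr.
rewrite -(sum_bweight_fiber p F dD shD) setUCr; apply: eq_big => [G|G _].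
  by rewrite subsetT setDE.
by congr (_ * _); apply: eq_bigl => e; rewrite inE.
Qed.

Section VertexStar.
Variables (n : nat) (v : 'I_n).

Definition star : {set edge_slot n} := [set e | ((val e).1 == v) || ((val e).2 == v)].

Definition other_end (e : edge_slot n) : 'I_n :=
  if (val e).1 == v then (val e).2 else (val e).1.

Definition star_to (S : {set 'I_n}) : {set edge_slot n} := [set e in star | other_end e \in S].

Definition isolate (G : graph n) : graph n := G :\: star.

Lemma star_to_subset (S : {set 'I_n}) : star_to S \subset star.
Proof. by apply/subsetP => e; rewrite inE => /andP[]. Qed.

Lemma star_toS (S S' : {set 'I_n}) : S \subset S' -> star_to S \subset star_to S'.
Proof.
move=> sSS'; apply/subsetP => e; rewrite !inE => /andP[-> /(subsetP sSS') //].
Qed.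

Lemma other_end_inj : {in star &, injective other_end}.
Proof.
move=> [[x1 y1] l1] [[x2 y2] l2]; rewrite !inE /other_end /= => s1 s2 E; apply: val_inj => /=.
case: (eqVneq x1 v) s1 E l1 => [-> _|_ /= /eqP ->];
  case: (eqVneq x2 v) s2 l2 => [-> _|_ /= /eqP ->] //=.
- by move=> _ -> _.
- by move=> l2 E l1; move: l1 l2; rewrite E; lia.
- by move=> l2 E l1; move: l1 l2; rewrite E; lia.
- by move=> _ -> _.
Qed.

Lemma adj_star (G : graph n) (u : 'I_n) :
  adj G u v = [exists e in G :&: star, other_end e == u].
Proof.
apply: eq_existsb => e; rewrite !inE /other_end -andbA; apply: andb_id2l => _.
case: (val e) (valP e) => x y /= xy; rewrite !xpair_eqE.
case: (eqVneq x v) xy => [-> vy|xv _] /=; last by rewrite orbF andbC.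
by rewrite -[y == v]val_eqE gtn_eqF // andbF.
Qed.

Lemma nbr_count_star (G : graph n) (S : {set 'I_n}) :
  nbr_count G S v = #|(G :&: star) :&: star_to S|.
Proof.
rewrite /nbr_count -(card_in_imset (f := other_end)); last first.
  by move=> e1 e2 /setIP[/setIP[_ s1] _] /setIP[/setIP[_ s2] _]; apply: other_end_inj.
apply: eq_card => u; rewrite inE adj_star; apply/andP/imsetP.
  case=> uS /existsP[e /andP[eGs /eqP eu]]; exists e => //.
  by case/setIP: (eGs) => _ es; rewrite inE eGs inE es eu.
case=> e /setIP[eGs]; rewrite inE => /andP[_ eS] ->; split=> //.
by apply/existsP; exists e; rewrite eGs eqxx.
Qed.

Lemma card_star_to (S : {set 'I_n}) : v \notin S -> #|star_to S| = #|S|.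
Proof.
move=> vS; rewrite -(setIidPr (star_to_subset S)) -[star]setTI -nbr_count_star.
apply: eq_card => u; rewrite inE; apply: andb_idr => uS.
have uv : u != v by apply: contraNneq vS => <-.
apply/existsP; case: (ltngtP u v) => [uv'|vu|/val_inj uEv]; last by rewrite uEv eqxx in uv.
  by exists (exist _ (u, v) uv' : edge_slot n); rewrite inE eqxx.
by exists (exist _ (v, u) vu : edge_slot n); rewrite inE eqxx orbT.
Qed.

Lemma adj_isolate (G : graph n) (u w : 'I_n) : u != v -> w != v ->
  adj (isolate G) u w = adj G u w.
Proof.
move=> uv wv; apply: eq_existsb => e; rewrite !inE [~~ _ && _]andbC -andbA.
apply: andb_id2l => _; apply: andb_idl.
by case/orP => /eqP ->; rewrite /= negb_or uv wv.
Qed.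

Lemma adj_isolate_v (G : graph n) (u : 'I_n) : adj (isolate G) u v = false.
Proof.
rewrite adj_star /isolate setDE -setIA [~: _ :&: _]setIC setICr setI0.
by apply/existsP => -[e]; rewrite inE.
Qed.

End VertexStar.

Section Exploration.
Variables (n a r : nat) (rule : nat -> {set 'I_n} -> {set 'I_n} -> 'I_n).
Hypothesis rule_in :
  forall (t : nat) (Z A : {set 'I_n}), A :\: Z != set0 -> rule t Z A \in A :\: Z.

Local Notation Aset := (Aset a r).
Local Notation Zset := (Zset a r rule).
Local Notation Tstop := (Tstop a r rule).

Lemma leq_nbr_count (G : graph n) (Z Z' : {set 'I_n}) (u : 'I_n) :
  Z \subset Z' -> (nbr_count G Z u <= nbr_count G Z' u)%N.
Proof.
move=> sZZ'; apply/subset_leq_card/subsetP => w.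
by rewrite !inE => /andP[/(subsetP sZZ') -> ->].
Qed.

Lemma Aset_subset (G : graph n) (Z Z' : {set 'I_n}) :
  Z \subset Z' -> Aset G Z \subset Aset G Z'.
Proof.
move=> sZZ'; apply/subsetP => u; rewrite !inE => /orP[-> //|/andP[-> rZ]].
by rewrite (leq_trans rZ (leq_nbr_count _ _ sZZ')) orbT.
Qed.

Lemma Zset_subS (G : graph n) (s : nat) : Zset G s \subset Zset G s.+1.
Proof. by rewrite /=; case: ifP => // _; apply: subsetUr. Qed.

Lemma Zset_sub (G : graph n) (s s' : nat) : (s <= s')%N -> Zset G s \subset Zset G s'.
Proof.
elim: s' => [|s' IH]; first by rewrite leqn0 => /eqP ->.
rewrite leq_eqVlt => /orP[/eqP -> //|/IH sZ].
exact: subset_trans sZ (Zset_subS G s').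
Qed.

Lemma Zset_sub_Aset (G : graph n) (s : nat) : Zset G s \subset Aset G (Zset G s).
Proof.
elim: s => [|s IH]; first exact: sub0set.
have sAA' := Aset_subset G (Zset_subS G s).
have step : Zset G s.+1 \subset Zset G s :|: Aset G (Zset G s).
  rewrite /=; case: ifP => [/(rule_in s.+1) /setDP[rA _]|_]; last exact: subsetUl.
  by rewrite subUset sub1set inE rA orbT subsetUl.
by apply: (subset_trans step); rewrite subUset (subset_trans IH sAA') sAA'.
Qed.

Lemma card_Zset_le (G : graph n) (s : nat) : (s <= Tstop G)%N -> #|Zset G s| = s.
Proof.
elim: s => [|s IH] sT; first by rewrite cards0.
have s_lt : (s < n.+1)%N by rewrite -(size_iota 0 n.+1) (leq_trans sT) ?find_size.
have /negbT := before_find 0%N sT; rewrite nth_iota // add0n.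
rewrite eqEsubset Zset_sub_Aset andbT -setD_eq0 => ne0.
have [_ rZ] := setDP (rule_in s.+1 ne0).
by rewrite /= ne0 cardsU1 rZ add1n IH ?(ltnW sT).
Qed.

Lemma Tstop_le (G : graph n) : (Tstop G <= n)%N.
Proof.
rewrite leqNgt; apply/negP => nT.
have := subset_leq_card (subsetT (Zset G (Tstop G))).
by rewrite card_Zset_le // cardsT card_ord leqNgt nT.
Qed.

Lemma Aset_Zset_Tstop (G : graph n) : Aset G (Zset G (Tstop G)) = Zset G (Tstop G).
Proof.
have has_stop : has (fun t => Aset G (Zset G t) == Zset G t) (iota 0 n.+1).
  by rewrite has_find size_iota ltnS Tstop_le.
by have /eqP := nth_find 0%N has_stop; rewrite nth_iota ?ltnS ?Tstop_le.
Qed.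

Lemma Zset_stop (G : graph n) (s : nat) : (Tstop G <= s)%N -> Zset G s = Zset G (Tstop G).
Proof.
elim: s => [|s IH]; first by rewrite leqn0 => /eqP ->.
rewrite leq_eqVlt => /orP[/eqP <- //|/IH /= ->].
by rewrite Aset_Zset_Tstop setDv eqxx.
Qed.

Lemma card_Zset (G : graph n) (s : nat) : #|Zset G s| = minn s (Tstop G).
Proof.
case: (leqP s (Tstop G)) => [sT|/ltnW Ts].
  by rewrite card_Zset_le // (minn_idPl sT).
by rewrite Zset_stop // card_Zset_le // (minn_idPr Ts).
Qed.

Variable v : 'I_n.
Hypotheses (a_le_v : (a <= v)%N) (r_gt0 : (0 < r)%N).

Lemma in_Aset_v (G : graph n) (Z : {set 'I_n}) : (v \in Aset G Z) = (r <= nbr_count G Z v)%N.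
Proof. by rewrite inE ltnNge a_le_v. Qed.

Lemma nbr_count_isolate (G : graph n) (Z : {set 'I_n}) (u : 'I_n) : v \notin Z -> u != v ->
  nbr_count (isolate v G) Z u = nbr_count G Z u.
Proof.
move=> vZ uv; apply: eq_card => w; rewrite !inE.
by case wZ: (w \in Z) => //=; rewrite adj_isolate //; apply: contraNneq vZ => <-.
Qed.

Lemma nbr_count_isolate_v (G : graph n) (Z : {set 'I_n}) : nbr_count (isolate v G) Z v = 0%N.
Proof. by apply: eq_card0 => w; rewrite !inE adj_isolate_v andbF. Qed.

Lemma Aset_isolate (G : graph n) (Z : {set 'I_n}) : v \notin Z -> (nbr_count G Z v < r)%N ->
  Aset (isolate v G) Z = Aset G Z.
Proof.
move=> vZ lt_r; apply/setP => u; case: (eqVneq u v) => [->|uv].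
  by rewrite !in_Aset_v nbr_count_isolate_v leqNgt r_gt0 leqNgt lt_r.
by rewrite !inE nbr_count_isolate.
Qed.

Lemma notin_Zset_isolate (G : graph n) (s : nat) : v \notin Zset (isolate v G) s.
Proof.
apply/negP => /(subsetP (Zset_sub_Aset _ s)).
by rewrite in_Aset_v nbr_count_isolate_v leqNgt r_gt0.
Qed.

Lemma Zset_isolate (G : graph n) (s0 : nat) :
    (forall s, (s < s0)%N -> Zset G s = Zset (isolate v G) s -> (nbr_count G (Zset G s) v < r)%N) ->
  forall s, (s <= s0)%N -> Zset G s = Zset (isolate v G) s.
Proof.
move=> lt_r; elim=> [//|s IH] ss0; have ZE := IH (ltnW ss0).
rewrite /= -ZE Aset_isolate ?ZE ?notin_Zset_isolate //.
by rewrite -ZE lt_r.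
Qed.

End Exploration.

Section MartingaleIncrement.
Variables (R : realFieldType) (n a r : nat) (p : R).
Variable rule : nat -> {set 'I_n} -> {set 'I_n} -> 'I_n.
Hypotheses (r_gt0 : (0 < r)%N) (p_gt0 : 0 < p) (p_lt1 : p < 1).
Hypothesis rule_in :
  forall (t : nat) (Z A : {set 'I_n}), A :\: Z != set0 -> rule t Z A \in A :\: Z.

Local Notation Zset := (Zset a r rule).
Local Notation Xind := (Xind a r rule).
Local Notation piT := (piT a r p rule).
Local Notation Mti := (Mti a r p rule).
Local Notation Mseq := (Mseq a r p rule).
Local Notation L := (n - a)%N.

Lemma piT_card (G : graph n) (s : nat) : piT G s = pihat r p #|Zset G s|.
Proof. by rewrite card_Zset. Qed.

Lemma piT_neq1 (G : graph n) (s : nat) : 1 - piT G s != 0.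
Proof. by rewrite subr_eq0 gt_eqF // piT_card pihat_lt1 // ltW. Qed.

Definition Xnorm (G : graph n) (s j : nat) : R :=
  ((Xind G s j)%:R - piT G s) / (1 - piT G s).

Lemma Mti_succ (G : graph n) (s j : nat) : (j < L)%N ->
  Mti G s j.+1 - Mti G s j = Xnorm G s j - Xnorm G s.-1 j.
Proof.
move=> jL; rewrite /Mti big_nat_recr //= [in X in _ - X](big_ltn jL) /Xnorm.
ring.
Qed.

Lemma Mti_wrap (G : graph n) (s : nat) : Mti G s L = Mti G s.+1 0.
Proof. by rewrite /Mti [X in _ + X = _]big_geq // [X in _ = X + _]big_geq // addr0 add0r. Qed.

Lemma Mseq_divmod (G : graph n) (k : nat) : (0 < L)%N ->
  Mseq k G = Mti G (k %/ L).+1 (k %% L).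
Proof.
move=> L_gt0; case: k => [|k]; first by rewrite /Mseq div0n mod0n Mti_wrap.
rewrite /Mseq divnS // modnS; case: ifP => [dvdL|_] //.
suff -> : (k %% L).+1 = L by rewrite Mti_wrap.
have := divn_eq k.+1 L; rewrite divnS // modnS dvdL add1n mulSn addn0 {1}(divn_eq k L).
lia.
Qed.

Lemma Mseq_increment (G : graph n) (k : nat) : (0 < L)%N ->
  Mseq k.+1 G - Mseq k G = Xnorm G (k %/ L).+1 (k %% L) - Xnorm G (k %/ L) (k %% L).
Proof. by move=> L_gt0; rewrite (Mseq_divmod G k L_gt0) Mti_succ ?ltn_pmod. Qed.

(* The step from M(k) to M(k+1) with T0 = k %/ (n - a) and i = k %% (n - a): it only involves
   the vertex v of index a + i, between times T0 and T0 + 1. *)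
Variables (T0 i : nat).
Hypothesis ai_lt_n : (a + i < n)%N.
Let v : 'I_n := Ordinal ai_lt_n.
Let a_le_v : (a <= v)%N := leq_addr i a.
Local Notation t := T0.+1.

Lemma Xind_v (G : graph n) (s : nat) : Xind G s i = (r <= nbr_count G (Zset G s) v)%N.
Proof.
apply/existsP/idP => [[u /andP[/eqP uE]]|]; last by exists v; rewrite eqxx.
by have -> : u = v by apply: val_inj.
Qed.

Definition uninfected (G : graph n) : bool := ~~ Xind G T0 i.

Lemma uninfected_lt (G : graph n) (s : nat) : uninfected G -> (s <= T0)%N ->
  (nbr_count G (Zset G s) v < r)%N.
Proof.
rewrite /uninfected Xind_v -ltnNge => lt_r sT0.
by apply: leq_ltn_trans lt_r; apply/leq_nbr_count/Zset_sub.
Qed.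

Lemma Zset_isolate_uninfected (G : graph n) (s : nat) : uninfected G -> (s <= t)%N ->
  Zset G s = Zset (isolate v G) s.
Proof.
move=> unG; apply: (Zset_isolate rule_in a_le_v r_gt0) => s' s't _.
exact: uninfected_lt.
Qed.

Lemma notin_Zset_uninfected (G : graph n) (s : nat) : uninfected G -> (s <= t)%N ->
  v \notin Zset G s.
Proof. by move=> unG st; rewrite Zset_isolate_uninfected // notin_Zset_isolate. Qed.

Lemma uninfectedE (G : graph n) :
  uninfected G = (#|(G :&: star v) :&: star_to v (Zset (isolate v G) T0)| < r)%N.
Proof.
rewrite -nbr_count_star; apply/idP/idP => [unG|lt_r].
  by rewrite -Zset_isolate_uninfected ?uninfected_lt.
have ZE : Zset G T0 = Zset (isolate v G) T0.
  apply: (Zset_isolate rule_in a_le_v r_gt0 (s0 := T0)) => // s sT0 ZEs.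
  by rewrite ZEs (leq_ltn_trans _ lt_r) // leq_nbr_count // Zset_sub // ltnW.
by rewrite /uninfected Xind_v ZE -ltnNge.
Qed.

Lemma piT_isolate (G : graph n) (s : nat) : uninfected G -> (s <= t)%N ->
  piT G s = piT (isolate v G) s.
Proof. by move=> unG st; rewrite !piT_card Zset_isolate_uninfected. Qed.

Lemma Xind_isolate (G : graph n) (s j : nat) : uninfected G ->
  (s <= T0)%N || (s == t) && (j != i) -> Xind G s j = Xind (isolate v G) s j.
Proof.
move=> unG cond; have st : (s <= t)%N by case/orP: cond => [/leqW|/andP[/eqP -> _]].
case: (eqVneq j i) cond => [-> | ji _].
  rewrite andbF orbF => sT0.
  by rewrite !Xind_v nbr_count_isolate_v leqn0 gtn_eqF // leqNgt uninfected_lt.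
rewrite /Defs.Xind -Zset_isolate_uninfected //; apply: eq_existsb => u.
case: (eqVneq u v) => [->|uv]; first by rewrite /= eqn_add2l eq_sym (negbTE ji).
by rewrite nbr_count_isolate ?notin_Zset_uninfected.
Qed.

Lemma Mti_isolate (G : graph n) (s i' : nat) : uninfected G ->
  (s <= T0)%N || (s == t) && (i' <= i)%N -> Mti G s i' = Mti (isolate v G) s i'.
Proof.
move=> unG cond; have st : (s <= t)%N by case/orP: cond => [/leqW|/andP[/eqP -> _]].
have s1T0 : (s.-1 <= T0)%N by case: s st {cond}.
rewrite /Mti (piT_isolate unG st) (piT_isolate unG (leqW s1T0)).
congr (_ + _); apply: eq_big_nat => j /andP[_ j_lt].
  rewrite Xind_isolate //; case/orP: cond => [->//|/andP[-> le_i']].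
  by rewrite (ltn_eqF (leq_trans j_lt le_i')) orbT.
by rewrite Xind_isolate ?s1T0.
Qed.

Lemma Mseq_isolate (G : graph n) (k j : nat) : (0 < L)%N -> (k %/ L = T0)%N -> (k %% L = i)%N ->
  uninfected G -> (j <= k)%N -> Mseq j G = Mseq j (isolate v G).
Proof.
move=> L_gt0 kT0 ki unG jk.
rewrite (Mseq_divmod G j L_gt0).
rewrite (Mseq_divmod (isolate v G) j L_gt0).
apply: Mti_isolate => //.
case: (ltnP (j %/ L)%N T0) => [//|ge_jT0].
have jT0 : (j %/ L = T0)%N by apply/eqP; rewrite eqn_leq ge_jT0 -kT0 leq_div2r.
rewrite jT0 eqxx /= -ki.
have := divn_eq j L; have := divn_eq k L; rewrite jT0 kT0; lia.
Qed.

Lemma Xnorm_increment_infected (G : graph n) : ~~ uninfected G ->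
  Xnorm G t i - Xnorm G T0 i = 0.
Proof.
rewrite negbK => XT0.
have Xt : Xind G t i.
  by move: XT0; rewrite !Xind_v => /leq_trans; apply; apply/leq_nbr_count/Zset_subS.
by rewrite /Xnorm XT0 Xt (divff (piT_neq1 G t)) (divff (piT_neq1 G T0)) subrr.
Qed.

Lemma Xnorm_increment (G : graph n) :
  Xnorm G t i - Xnorm G T0 i =
  threshold_increment r (piT (isolate v G) T0) (piT (isolate v G) t)
    #|(G :&: star v) :&: star_to v (Zset (isolate v G) T0)|
    #|(G :&: star v) :&: star_to v (Zset (isolate v G) t)|.
Proof.
rewrite /threshold_increment -uninfectedE; case: (boolP (uninfected G)) => [unG|infG].
  rewrite /Xnorm (negbTE unG) Xind_v Zset_isolate_uninfected // nbr_count_star mul1r.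
  by rewrite (piT_isolate unG (leqnn t)) (piT_isolate unG (leqnSn T0)) sub0r mulNr opprK.
by rewrite (Xnorm_increment_infected infG) mul0r.
Qed.

Lemma sum_fiber_increment (H : graph n) : H \subset ~: star v ->
  \sum_(G : graph n | isolate v G == H) Gnp p G * (Xnorm G t i - Xnorm G T0 i) = 0.
Proof.
move=> sH; have HH : isolate v H = H by apply/setDidPl; rewrite disjoints_subset.
have piT_star s : piT H s = pihat r p #|star_to v (Zset H s)|.
  by rewrite piT_card card_star_to // -HH notin_Zset_isolate.
set D1 := star_to v (Zset H T0); set D2 := star_to v (Zset H t).
pose F K := threshold_increment r (pihat r p #|D1|) (pihat r p #|D2|) #|K :&: D1| #|K :&: D2|.
rewrite (eq_bigr (fun G => Gnp p G * F (G :&: star v))) => [|G /eqP GH]; last first.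
  by rewrite Xnorm_increment GH !piT_star.
rewrite (sum_Gnp_fiber p F sH) (sum_bweight_threshold_increment r_gt0 (ltW p_gt0) p_lt1) ?mulr0 //.
  exact/star_toS/Zset_subS.
exact: star_to_subset.
Qed.

Lemma sum_isolate_invariant_increment (P : pred (graph n)) :
    (forall G, uninfected G -> P G = P (isolate v G)) ->
  \sum_(G | P G) Gnp p G * (Xnorm G t i - Xnorm G T0 i) = 0.
Proof.
move=> P_isolate.
(* Infected graphs contribute 0, so P may be read on [isolate v G]. *)
have -> : \sum_(G | P G) Gnp p G * (Xnorm G t i - Xnorm G T0 i) =
    \sum_(G | P (isolate v G)) Gnp p G * (Xnorm G t i - Xnorm G T0 i).
  rewrite [LHS]big_mkcond [RHS]big_mkcond; apply: eq_bigr => G _.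
  case: (boolP (uninfected G)) => [/P_isolate -> //|infG].
  by rewrite (Xnorm_increment_infected infG) mulr0 !if_same.
rewrite (partition_big (isolate v) (fun H => H \subset ~: star v)) => [|G _]; last first.
  by rewrite /isolate setDE subsetIr.
apply: big1 => H sH; rewrite (eq_bigl (fun G => P H && (isolate v G == H))) => [|G].
  by case: (P H); [exact: sum_fiber_increment | exact: big_pred0_eq].
by case: eqP => [->|_]; rewrite ?andbF.
Qed.

Lemma sum_atom_increment (k : nat) (w0 : graph n) :
    (0 < L)%N -> (k %/ L = T0)%N -> (k %% L = i)%N ->
  \sum_(w | [forall j : 'I_k.+1, Mseq j w == Mseq j w0]) Gnp p w * (Mseq k.+1 w - Mseq k w)
  = 0.
Proof.
move=> L_gt0 kT0 ki.
rewrite (eq_bigr (fun G => Gnp p G * (Xnorm G t i - Xnorm G T0 i))) => [|G _]; last first.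
  by rewrite Mseq_increment // kT0 ki.
apply: sum_isolate_invariant_increment => G unG; apply: eq_forallb => j.
by rewrite -(Mseq_isolate L_gt0 kT0 ki unG (ltn_ord j)).
Qed.

End MartingaleIncrement.

Theorem lemma1 (R : realFieldType) (n a r : nat) (p : R)
  (rule : nat -> {set 'I_n} -> {set 'I_n} -> 'I_n) :
  (2 <= r)%N -> 0 < p -> p < 1 -> (a <= n)%N ->
  (forall (t : nat) (Z A : {set 'I_n}), A :\: Z != set0 -> rule t Z A \in A :\: Z) ->
  natural_martingale (@Gnp R n p) (n * (n - a)) (Mseq a r p rule).
Proof.
move=> r_ge2 p_gt0 p_lt1 a_le_n rule_in k k_lt w0.
have L_gt0 : (0 < n - a)%N by case: (n - a)%N k_lt => //; rewrite muln0.
have ai_lt_n : (a + k %% (n - a) < n)%N by rewrite -{2}(subnKC a_le_n) ltn_add2l ltn_pmod.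
exact: (sum_atom_increment (ltnW r_ge2) p_gt0 p_lt1 rule_in ai_lt_n w0 L_gt0).
Qed.
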